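(* Let a quantum circuit with input-node set $I$ be given, together with an input state vector $|\psi\rangle\in Q^{\otimes I}$. Then there is a unique function assigning to each stage $Z$ of the circuit a vector $C(|\psi\rangle,Z)\in Q^{\otimes\mathrm{Exit}(Z)}$ such that: (1) $C(|\psi\rangle,\emptyset)=|\psi\rangle$ (note $\mathrm{Exit}(\emptyset)=I$); (2) whenever $G$ is a gate ready at a stage $Z$, $$C(|\psi\rangle,Z+G)=(I_R\otimes U_G)\,C(|\psi\rangle,Z),$$ where $R=\mathrm{Exit}(Z)\setminus\pi(G)$, $I_R$ is the identity operator on $Q^{\otimes R}$, and $Q^{\otimes\mathrm{Exit}(Z)}$ and $Q^{\otimes\mathrm{Exit}(Z+G)}$ are identified with $Q^{\otimes R}\otimes Q^{\otimes\iota_G}$ and $Q^{\otimes R}\otimes Q^{\otimes o_G}$ respectively as described in the context.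
   Context: $Q=\mathbb{C}^2$; for a finite set $S$, $Q^{\otimes S}$ is the tensor product of $S$-indexed copies of $Q$; a bijection $S\to S'$ induces a canonical isomorphism $Q^{\otimes S}\cong Q^{\otimes S'}$, and for disjoint $S,T$ one has canonically $Q^{\otimes(S\sqcup T)}\cong Q^{\otimes S}\otimes Q^{\otimes T}$. A quantum circuit consists of a finite set $I$ of input nodes, a finite set $O$ of output nodes, a finite set of gates, an assignment to each gate $G$ of a triple $(\iota_G,o_G,U_G)$ with $\iota_G,o_G$ finite sets and $U_G:Q^{\otimes\iota_G}\to Q^{\otimes o_G}$ unitary, and a bijective provider function $\pi$ from consumers to producers. Producers are the input nodes and output ports $(G,\mathrm{out},l)$, $l\in o_G$; consumers are output nodes and input ports $(G,\mathrm{in},l)$, $l\in\iota_G$ (all pairwise distinct). The relation $G\prec H$ on gates (iff $\pi$ maps some input port of $H$ to an output port of $G$) is required to be acyclic. For a gate $H$, $\pi(H)=\{\pi(H,\mathrm{in},l):l\in\iota_H\}$. A stage is a set $Z$ of gates such that $H\in Z$ and $H'\prec H$ imply $H'\in Z$. $\mathrm{Exit}(Z)$ is the set of producers that are input nodes or output ports of gates in $Z$ and that lie in no $\pi(H)$ with $H\in Z$. A gate $G\notin Z$ is ready at $Z$ if every $H\prec G$ lies in $Z$; then $Z+G:=Z\cup\{G\}$. If $G$ is ready at $Z$ and $R=\mathrm{Exit}(Z)\setminus\pi(G)$, then $\mathrm{Exit}(Z)=R\sqcup\pi(G)$ and $\mathrm{Exit}(Z+G)=R\sqcup\{(G,\mathrm{out},m):m\in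 o_G\}$; using the bijections $l\mapsto\pi(G,\mathrm{in},l)$ ($l\in\iota_G$) and $m\mapsto(G,\mathrm{out},m)$ ($m\in o_G$), one identifies $Q^{\otimes\mathrm{Exit}(Z)}$ with $Q^{\otimes R}\otimes Q^{\otimes\iota_G}$ and $Q^{\otimes\mathrm{Exit}(Z+G)}$ with $Q^{\otimes R}\otimes Q^{\otimes o_G}$. *)

From HB Require Import structures.
From mathcomp Require Import all_boot all_order all_algebra.
From mathcomp Require Import complex.
From mathcomp Require Import reals.
Set Implicit Arguments. Unset Strict Implicit. Unset Printing Implicit Defensive.
Import Order.TTheory GRing.Theory Num.Theory.
Local Open Scope ring_scope.

(* Basis assignments of Q^{ox S} for S a finite subset of a finType T:
   functions S -> bool.  A vector of Q^{ox S} is its coordinate function. *)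
Definition basis (T : finType) (S : {set T}) := {ffun {x : T | x \in S} -> bool}.
Definition tens (K : Type) (T : finType) (S : {set T}) := {ffun basis S -> K}.

Definition tot (T : finType) (S : {set T}) (b : basis S) : T -> bool :=
  fun x => match insub x with Some y => b y | None => false end.
Definition restr (T : finType) (S : {set T}) (f : T -> bool) : basis S :=
  [ffun x => f (val x)].

Section Circuits.
Variables (R : realType) (In Out Gate L : finType).
Local Notation C := (R[i]).

(* producers: input nodes (inl i) and output ports (inr (G,m)), m in o_G;
   consumers: output nodes (inl o) and input ports (inr (G,l)), l in iota_G *)
Definition producer := (In + (Gate * L))%type.
Definition consumer := (Out + (Gate * L))%type.

Record circuit := Circuit {
  iports : Gate -> {set L};
  oports : Gate -> {set L};
  gU : forall G : Gate, {ffun basis (oports G) -> tens C (iports G)};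
      (* U_G : Q^{ox iota_G} -> Q^{ox o_G}, gU G b a = <b| U_G |a> *)
  prov : consumer -> producer
}.

Variable c : circuit.

Definition valid_prod (p : producer) : bool :=
  match p with inl _ => true | inr (G, m) => m \in oports c G end.
Definition valid_cons (q : consumer) : bool :=
  match q with inl _ => true | inr (G, l) => l \in iports c G end.

Definition unitary (A B : finType) (U : {ffun A -> {ffun B -> C}}) : Prop :=
  (forall a a' : B, \sum_(b : A) (U b a)^* * U b a' = (a == a')%:R) /\
  (forall b b' : A, \sum_(a : B) U b a * (U b' a)^* = (b == b')%:R).

Definition prec (G H : Gate) : bool :=
  [exists l in iports c H, exists m : L, prov c (inr (H, l)) == inr (G, m)].

Definition wf_circuit : Prop :=
  (forall G, unitary (gU c G)) /\
  (forall q, valid_cons q -> valid_prod (prov c q)) /\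
  {in valid_cons &, injective (prov c)} /\
  (forall p, valid_prod p -> exists2 q, valid_cons q & prov c q = p) /\
  (forall G H, prec G H -> ~~ connect prec H G).

Definition provs (H : Gate) : {set producer} :=
  [set prov c (inr (H, l)) | l in iports c H].

Definition stage (Z : {set Gate}) : Prop :=
  forall H H', H \in Z -> prec H' H -> H' \in Z.

Definition from_inputs_or (Z : {set Gate}) (p : producer) : bool :=
  match p with inl _ => true | inr (G, _) => G \in Z end.

Definition Exit (Z : {set Gate}) : {set producer} :=
  [set p | valid_prod p && from_inputs_or Z p &&
           [forall H in Z, p \notin provs H]].

Definition ready (Z : {set Gate}) (G : Gate) : Prop :=
  G \notin Z /\ forall H, prec H G -> H \in Z.

(* Given a basis assignment b of Exit(Z+G) (i.e. of R ⊔ outputs of G) and a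
   basis assignment a of iota_G, the basis assignment of Exit(Z) = R ⊔ pi(G)
   obtained via l |-> pi(G,in,l). *)
Definition glue (Z : {set Gate}) (G : Gate) (b : basis (Exit (Z :|: [set G])))
    (a : basis (iports c G)) : basis (Exit Z) :=
  restr (Exit Z) (fun x =>
    if x \in provs G then
      match [pick l in iports c G | prov c (inr (G, l)) == x] with
      | Some l => tot a l | None => false end
    else tot b x).

Definition outpart (Z : {set Gate}) (G : Gate) (b : basis (Exit (Z :|: [set G])))
  : basis (oports c G) :=
  restr (oports c G) (fun m => tot b (inr (G, m))).

Definition circuit_states (psi : {ffun {ffun In -> bool} -> C})
    (St : forall Z : {set Gate}, tens C (Exit Z)) : Prop :=
  (* (1): C(psi, {}) = psi, identifying Exit({}) with I via i |-> inl i *)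
  (forall b : basis (Exit set0), St set0 b = psi [ffun i => tot b (inl i)]) /\
  (forall Z G, stage Z -> ready Z G ->
     forall b : basis (Exit (Z :|: [set G])),
       St (Z :|: [set G]) b =
       \sum_(a : basis (iports c G)) gU c G (outpart b) a * St Z (glue b a)).

End Circuits.

Arguments circuit_states {R In Out Gate L} c psi St.
Arguments stage {R In Out Gate L} c Z.
Arguments Exit {R In Out Gate L} c Z.
Arguments wf_circuit {R In Out Gate L} c.

From HB Require Import structures.
From mathcomp Require Import all_boot all_order all_algebra.
From mathcomp Require Import complex.
From mathcomp Require Import reals.
Set Implicit Arguments. Unset Strict Implicit. Unset Printing Implicit Defensive.
Import Order.TTheory GRing.Theory Num.Theory.
Local Open Scope ring_scope.

(* A wire assignment w gives a basis value to every producer.  For a stage Z and a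
   basis assignment b of Exit(Z) we set
     C(|psi>, Z)(b) = sum_w psi(w|_I) * prod_(H in Z) <w|_(o_H)| U_H |w|_(pi(H))>,
   over the w that agree with b on Exit(Z) and vanish on the producers that are not
   yet available at Z (neither input nodes nor output ports of gates of Z).
   - For Z = {} the only such w is b itself, which gives property (1).
   - When G is ready at Z, Exit(Z+G) = (Exit(Z) \ pi(G)) u {outputs of G}.  Extending a
     wire assignment for Z by b on the outputs of G reindexes the sum for Z+G as a sum
     over wire assignments for Z weighted by <b|_(o_G)| U_G |w|_(pi(G))>; summing the
     right-hand side of (2) over the glued assignments gives the same sum.
   - Uniqueness follows by induction on stages: removing a prec-maximal gate of a
     nonempty stage leaves a smaller stage at which that gate is ready. *)

Lemma tot_in (T : finType) (S : {set T}) (b : basis S) (x : T) (xS : x \in S) :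
  tot b x = b (Sub x xS).
Proof. by rewrite /tot insubT. Qed.

Lemma tot_out (T : finType) (S : {set T}) (b : basis S) (x : T) :
  x \notin S -> tot b x = false.
Proof. by move=> xNS; rewrite /tot insubF //; apply/negbTE. Qed.

Lemma tot_restr (T : finType) (S : {set T}) (f : T -> bool) (x : T) :
  tot (restr S f) x = (x \in S) && f x.
Proof.
have [xS|xNS] := boolP (x \in S); last by rewrite tot_out.
by rewrite (tot_in _ xS) ffunE.
Qed.

Lemma basis_ext (T : finType) (S : {set T}) (a a' : basis S) :
  (forall x, x \in S -> tot a x = tot a' x) -> a = a'.
Proof.
move=> eq_aa'; apply/ffunP => -[x xS].
by have := eq_aa' x xS; rewrite !(tot_in _ xS).
Qed.

Lemma restr_ext (T : finType) (S : {set T}) (f g : T -> bool) :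
  (forall x, x \in S -> f x = g x) -> restr S f = restr S g.
Proof. by move=> eq_fg; apply/ffunP => x; rewrite !ffunE eq_fg // (valP x). Qed.

(* Every nonempty finite set has a maximal element for an acyclic relation:
   take an element reaching the fewest points. *)
Lemma exists_maximal (T : finType) (e : rel T) (A : {set T}) (x0 : T) :
  (forall x y, e x y -> ~~ connect e y x) -> x0 \in A ->
  exists2 x, x \in A & forall y, y \in A -> ~~ e x y.
Proof.
move=> acyclic Ax0; pose reach x := #|[set y | connect e x y]|.
have [x Ax minx] := arg_minnP reach Ax0.
exists x => // y Ay; apply/negP => exy.
have := minx y Ay; rewrite leqNgt => /negP; apply.
apply: proper_card; apply/properP; split.
  by apply/subsetP => z; rewrite !inE => yz; apply: connect_trans yz; apply: connect1.
by exists x; rewrite !inE ?connect0 //; apply: acyclic.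
Qed.

Section Circuit.
Variables (R : realType) (In Out Gate L : finType).
Variable c : circuit R In Out Gate L.
Hypothesis wf : wf_circuit c.
Local Notation C := (R[i]).
Local Notation producer := (producer In Gate L).
Local Notation wires := {ffun producer -> bool}.

Lemma prec_acyclic G H : prec c G H -> ~~ connect (prec c) H G.
Proof. by case: wf => _ [_ [_ [_ acyclic]]]; apply: acyclic. Qed.

Lemma prec_irrefl G : ~~ prec c G G.
Proof. by apply/negP => /prec_acyclic; rewrite connect0. Qed.

Lemma prec_of_prov H l G m :
  l \in iports c H -> prov c (inr (H, l)) = inr (G, m) -> prec c G H.
Proof.
move=> lH prov_l; apply/existsP; exists l; rewrite lH /=.
by apply/existsP; exists m; rewrite prov_l.
Qed.

Lemma prov_inj G l H l' : l \in iports c G -> l' \in iports c H ->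
  prov c (inr (G, l)) = prov c (inr (H, l')) -> G = H /\ l = l'.
Proof.
case: wf => _ [_ [inj _]] lG l'H eq_prov.
by have [-> ->] : (inr (G, l) : consumer Out Gate L) = inr (H, l') by apply: inj.
Qed.

Lemma prov_valid G l : l \in iports c G -> valid_prod c (prov c (inr (G, l))).
Proof. by case: wf => _ [valid _] lG; apply: valid. Qed.

Lemma in_provs p H :
  (p \in provs c H) = [exists l in iports c H, prov c (inr (H, l)) == p].
Proof.
apply/imsetP/existsP => [[l lH ->]|[l /andP[lH /eqP <-]]]; last by exists l.
by exists l; rewrite lH eqxx.
Qed.

Lemma stage_remove_maximal Z G : stage c Z -> G \in Z ->
  (forall H, H \in Z -> ~~ prec c G H) -> stage c (Z :\ G) /\ ready c (Z :\ G) G.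
Proof.
move=> stZ ZG maxG; split.
  move=> H H'; rewrite !inE => /andP[HG ZH] H'H; rewrite (stZ _ _ ZH H'H) andbT.
  by apply/eqP => H'G; move: (maxG _ ZH); rewrite -H'G H'H.
split; first by rewrite !inE eqxx.
move=> H HG; rewrite !inE (stZ _ _ ZG HG) andbT.
by apply/eqP => eqHG; move: HG; rewrite eqHG (negbTE (prec_irrefl G)).
Qed.

Lemma stage_ind (P : {set Gate} -> Prop) :
  P set0 -> (forall Z G, stage c Z -> ready c Z G -> P Z -> P (Z :|: [set G])) ->
  forall Z, stage c Z -> P Z.
Proof.
move=> P0 P_step Z; have [n] := ubnP #|Z|; elim: n Z => // n IH Z ltZn stZ.
have [->|[G0 ZG0]] := set_0Vmem Z; first exact: P0.
have [G ZG maxG] := exists_maximal prec_acyclic ZG0.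
have [stZG rdy] := stage_remove_maximal stZ ZG maxG.
rewrite -(setD1K ZG) setUC; apply: P_step stZG rdy (IH _ _ stZG).
by rewrite (cardsD1 G Z) ZG in ltZn.
Qed.

Definition available (Z : {set Gate}) (p : producer) : bool :=
  valid_prod c p && from_inputs_or Z p.

Definition is_outport (G : Gate) (p : producer) : bool :=
  if p is inr (G', m) then (G' == G) && (m \in oports c G) else false.

Lemma in_Exit Z p :
  (p \in Exit c Z) = available Z p && [forall H in Z, p \notin provs c H].
Proof. by rewrite inE. Qed.

Lemma Exit_empty p : (p \in Exit c set0) = available set0 p.
Proof. by rewrite in_Exit; apply/andb_idr => _; apply/forallP => H; rewrite in_set0. Qed.

Section ExitStep.
Variables (Z : {set Gate}) (G : Gate).
Hypotheses (stZ : stage c Z) (rdy : ready c Z G).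
Local Notation ZG := (Z :|: [set G]).

Lemma gate_notin_stage : G \notin Z.
Proof. by case: rdy. Qed.

Lemma inputs_from_stage H l G' m : H \in ZG -> l \in iports c H ->
  prov c (inr (H, l)) = inr (G', m) -> G' \in Z.
Proof.
move=> ZGH lH prov_l; have G'H := prec_of_prov lH prov_l.
move: ZGH; rewrite !inE => /orP[ZH | /eqP eqHG]; first exact: stZ ZH G'H.
by apply: (proj2 rdy); rewrite -eqHG.
Qed.

Lemma provs_not_outport H l : H \in ZG -> l \in iports c H ->
  ~~ is_outport G (prov c (inr (H, l))).
Proof.
move=> ZGH lH; case prov_l: (prov c (inr (H, l))) => [//|[G' m]] /=.
apply/negP => /andP[/eqP eqG' _].
by move: (inputs_from_stage ZGH lH prov_l); rewrite eqG' (negbTE gate_notin_stage).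
Qed.

Lemma available_step p : available ZG p = is_outport G p || available Z p.
Proof.
case: p => [//|[G' m]]; rewrite /available /= !inE.
by case: eqP => [->|_]; rewrite ?orbT ?orbF ?andbT ?andbF //; case: (_ \in _).
Qed.

Lemma outport_unavailable p : is_outport G p -> ~~ available Z p.
Proof.
case: p => [//|[G' m]] /andP[/eqP -> _].
by rewrite /available /= (negbTE gate_notin_stage) andbF.
Qed.

Lemma outport_notin_Exit p : is_outport G p -> p \notin Exit c Z.
Proof. by move=> outp; rewrite in_Exit (negbTE (outport_unavailable outp)). Qed.

Lemma Exit_step p :
  (p \in Exit c ZG) = is_outport G p || (p \in Exit c Z :\: provs c G).
Proof.
rewrite !in_Exit inE in_Exit available_step.
have [outp|notoutp] /= := boolP (is_outport G p).
  apply/forallP => H; apply/implyP => ZGH; rewrite in_provs; apply/negP.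
  case/existsP => l /andP[lH /eqP prov_l].
  by move: (provs_not_outport ZGH lH); rewrite prov_l outp.
rewrite andbCA; congr (_ && _); rewrite andbC.
apply/forallP/andP => [all_ZG|[/forallP all_Z notpG] H].
  split; last by have := all_ZG G; rewrite !inE eqxx orbT.
  by apply/forallP => H; apply/implyP => ZH; have := all_ZG H; rewrite !inE ZH.
by rewrite !inE; apply/implyP => /orP[ZH|/eqP ->] //; have := all_Z H; rewrite ZH.
Qed.

Lemma provs_in_Exit l : l \in iports c G -> prov c (inr (G, l)) \in Exit c Z.
Proof.
move=> lG; rewrite in_Exit /available prov_valid //=; apply/andP; split.
  case prov_l: (prov c (inr (G, l))) => [//|[H m]] /=.
  exact: (proj2 rdy) (prec_of_prov lG prov_l).
apply/forallP => H; apply/implyP => ZH; rewrite in_provs; apply/negP.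
case/existsP => l' /andP[l'H /eqP prov_l'].
have [eqGH _] := prov_inj lG l'H (esym prov_l').
by move: gate_notin_stage; rewrite eqGH ZH.
Qed.

End ExitStep.

Definition matches (A : {set producer}) (D : pred producer) (f : producer -> bool)
    (w : wires) : bool :=
  [forall p, (p \in A) ==> (w p == f p)] && [forall p, ~~ D p ==> ~~ w p].

Lemma matchesP (A : {set producer}) (D : pred producer) (f : producer -> bool)
    (w : wires) :
  reflect ((forall p, p \in A -> w p = f p) /\ (forall p, ~~ D p -> w p = false))
          (matches A D f w).
Proof.
apply: (iffP andP) => [[/forallP agree /forallP vanish]|[agree vanish]]; split.
- by move=> p pA; apply/eqP; exact: implyP (agree p) pA.
- by move=> p pD; apply/negbTE; exact: implyP (vanish p) pD.
- by apply/forallP => p; apply/implyP => /agree ->.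
- by apply/forallP => p; apply/implyP => /vanish ->.
Qed.

Variable psi : {ffun {ffun In -> bool} -> C}.

Definition gate_amp (H : Gate) (w : wires) : C :=
  gU c H (restr (oports c H) (fun m => w (inr (H, m))))
         (restr (iports c H) (fun l => w (prov c (inr (H, l))))).

Definition path_amp (Z : {set Gate}) (w : wires) : C :=
  psi [ffun i => w (inl i)] * \prod_(H in Z) gate_amp H w.

Definition consistent (Z : {set Gate}) (b : basis (Exit c Z)) (w : wires) : bool :=
  matches (Exit c Z) (available Z) (tot b) w.

Definition path_sum (Z : {set Gate}) : tens C (Exit c Z) :=
  [ffun b => \sum_(w | consistent b w) path_amp Z w].

(* Property (1): at the empty stage only the wire assignment b itself contributes. *)
Lemma path_sum_empty (b : basis (Exit c set0)) :
  path_sum set0 b = psi [ffun i => tot b (inl i)].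
Proof.
rewrite ffunE (big_pred1 [ffun p => tot b p]); last first.
  move=> w; apply/matchesP/eqP => [[agree vanish]|->]; last first.
    by split=> p; rewrite ffunE // -Exit_empty => /tot_out.
  apply/ffunP => p; rewrite ffunE.
  have [avail|unavail] := boolP (available set0 p); first by rewrite agree ?Exit_empty.
  by rewrite vanish // tot_out ?Exit_empty.
by rewrite /path_amp big_set0 mulr1; congr (psi _); apply/ffunP => i; rewrite !ffunE.
Qed.

Section PathSumStep.
Variables (Z : {set Gate}) (G : Gate).
Hypotheses (stZ : stage c Z) (rdy : ready c Z G).
Local Notation ZG := (Z :|: [set G]).
Variable b : basis (Exit c ZG).

Definition consistent_rest (w : wires) : bool :=
  matches (Exit c Z :\: provs c G) (available Z) (tot b) w.

Definition input_part (w : wires) : basis (iports c G) :=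
  restr _ (fun l => w (prov c (inr (G, l)))).

Lemma glue_prov (a : basis (iports c G)) l : l \in iports c G ->
  tot (glue b a) (prov c (inr (G, l))) = tot a l.
Proof.
move=> lG; rewrite tot_restr provs_in_Exit //=.
have -> : prov c (inr (G, l)) \in provs c G by apply/imsetP; exists l.
case: pickP => [l' /andP[l'G /eqP prov_l']|/(_ l)]; last by rewrite lG eqxx.
by have [_ ->] := prov_inj l'G lG prov_l'.
Qed.

Lemma glue_rest (a : basis (iports c G)) p : p \in Exit c Z :\: provs c G ->
  tot (glue b a) p = tot b p.
Proof. by rewrite inE => /andP[notpG pZ]; rewrite tot_restr pZ /= (negbTE notpG). Qed.

Lemma consistent_glue (a : basis (iports c G)) w :
  consistent (glue b a) w = consistent_rest w && (a == input_part w).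
Proof.
rewrite /consistent /consistent_rest /matches -andbA [_ && (a == _)]andbC andbA.
congr (_ && _); apply/idP/idP.
  move/forallP => agree; apply/andP; split.
    apply/forallP => p; apply/implyP => pR.
    by have := agree p; rewrite glue_rest // (subsetP (subsetDl _ _) _ pR).
  apply/eqP/basis_ext => l lG; rewrite /input_part tot_restr lG /=.
  by have := agree (prov c (inr (G, l))); rewrite provs_in_Exit // glue_prov // => /eqP.
case/andP => /forallP agree /eqP ->; apply/forallP => p; apply/implyP => pZ.
have [/imsetP[l lG ->]|notpG] := boolP (p \in provs c G).
  by rewrite glue_prov // /input_part tot_restr lG.
by have := agree p; rewrite inE pZ notpG glue_rest // inE notpG.
Qed.

Lemma path_sum_glue :
  \sum_(a : basis (iports c G)) gU c G (outpart b) a * path_sum Z (glue b a) =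
  \sum_(w | consistent_rest w) gU c G (outpart b) (input_part w) * path_amp Z w.
Proof.
transitivity (\sum_(a : basis (iports c G)) \sum_w
   ((consistent_rest w && (a == input_part w))%:R *
    (gU c G (outpart b) (input_part w) * path_amp Z w))).
  apply: eq_bigr => a _; rewrite ffunE big_distrr /= big_mkcond /=.
  apply: eq_bigr => w _; rewrite consistent_glue.
  by case: (boolP (_ && _)) => [/andP[_ /eqP <-]|_]; rewrite ?mul1r ?mul0r.
rewrite exchange_big /= [RHS]big_mkcond /=; apply: eq_bigr => w _.
rewrite (bigD1 (input_part w)) //= eqxx andbT big1 ?addr0 => [|a /negbTE ->].
  by case: (consistent_rest w); rewrite ?mul1r ?mul0r.
by rewrite andbF mul0r.
Qed.

Definition extend (w : wires) : wires :=
  [ffun p => if is_outport G p then tot b p else w p].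
Definition forget (w : wires) : wires :=
  [ffun p => if is_outport G p then false else w p].

Lemma extend_forget v : consistent b v -> extend (forget v) = v.
Proof.
case/matchesP => agree _; apply/ffunP => p; rewrite !ffunE.
by case outp: (is_outport G p) => //; rewrite agree // (Exit_step stZ rdy) outp.
Qed.

(* extension is a bijection from the assignments compatible with b on R
   onto those contributing to the coordinate b at Z+G *)
Lemma consistent_extend w :
  consistent b (extend w) && (forget (extend w) == w) = consistent_rest w.
Proof.
apply/andP/matchesP => [[/matchesP[agree vanish] /eqP forget_w]|[agree vanish]].
  split=> p.
    move=> pR; have notoutp : ~~ is_outport G p.
      move: pR; rewrite in_setD => /andP[_ pZ].
      by apply/negP => /(outport_notin_Exit rdy); rewrite pZ.
    by have := agree p; rewrite (Exit_step stZ rdy) pR orbT ffunE (negbTE notoutp); apply.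
  have [outp _|notoutp unavail] := boolP (is_outport G p).
    by rewrite -forget_w ffunE outp.
  by have := vanish p; rewrite available_step (negbTE notoutp) unavail ffunE
                                (negbTE notoutp); apply.
split.
  apply/matchesP; split=> p; rewrite ffunE.
    by rewrite (Exit_step stZ rdy); case: ifP => //= _ /agree.
  by rewrite available_step negb_or => /andP[/negbTE -> /vanish].
apply/eqP/ffunP => p; rewrite !ffunE; case outp: (is_outport G p) => //.
by rewrite vanish // (outport_unavailable rdy).
Qed.

Lemma path_amp_extend w :
  path_amp ZG (extend w) = gU c G (outpart b) (input_part w) * path_amp Z w.
Proof.
have extend_prov H l : H \in ZG -> l \in iports c H ->
    extend w (prov c (inr (H, l))) = w (prov c (inr (H, l))).
  by move=> ZGH lH; rewrite ffunE (negbTE (provs_not_outport stZ rdy ZGH lH)).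
rewrite /path_amp setUC big_setU1 ?(gate_notin_stage rdy) //= mulrCA.
congr (_ * (_ * _)).
- congr (gU c G _ _).
    by apply: restr_ext => m mG; rewrite ffunE /= eqxx mG.
  by apply: restr_ext => l lG; rewrite extend_prov // !inE eqxx orbT.
- by congr (psi _); apply/ffunP => i; rewrite !ffunE.
- apply: eq_bigr => H ZH; congr (gU c H _ _).
    apply: restr_ext => m mH; rewrite ffunE /=.
    by case: eqP => // eqHG; rewrite eqHG (negbTE (gate_notin_stage rdy)) in ZH.
  by apply: restr_ext => l lH; rewrite extend_prov // !inE ZH.
Qed.

Lemma path_sum_step :
  path_sum ZG b =
  \sum_(a : basis (iports c G)) gU c G (outpart b) a * path_sum Z (glue b a).
Proof.
rewrite path_sum_glue ffunE (reindex_onto extend forget extend_forget) /=.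
by apply: eq_big => w; [exact: consistent_extend | rewrite path_amp_extend].
Qed.

End PathSumStep.

Lemma path_sum_states : circuit_states c psi path_sum.
Proof. by split=> [b|Z G stZ rdy b]; [exact: path_sum_empty | exact: path_sum_step]. Qed.

Lemma circuit_states_unique St : circuit_states c psi St ->
  forall Z, stage c Z -> St Z = path_sum Z.
Proof.
case=> St_empty St_step; have [sum_empty sum_step] := path_sum_states.
apply: stage_ind => [|Z G stZ rdy IH]; apply/ffunP => b.
  by rewrite St_empty sum_empty.
by rewrite (St_step _ _ stZ rdy) (sum_step _ _ stZ rdy) IH.
Qed.

End Circuit.

Theorem mainTheorem5 (R : realType) (In Out Gate L : finType)
    (c : circuit R In Out Gate L) (wf : wf_circuit c)
    (psi : {ffun {ffun In -> bool} -> R[i]}) :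
  exists St : forall Z : {set Gate}, tens R[i] (Exit c Z),
    circuit_states c psi St /\
    (forall St' : forall Z : {set Gate}, tens R[i] (Exit c Z),
       circuit_states c psi St' -> forall Z, stage c Z -> St' Z = St Z).
Proof.
exists (path_sum c psi); split; first exact: path_sum_states.
by move=> St' St'_states Z stZ; apply: circuit_states_unique.
Qed.
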